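(* Let $K=(S,L,\to)$ be a Kripke structure and $\mathcal{C}$ a colouring of $S$ such that any two states with the same colour satisfy the same atomic propositions, have the same $\mathcal{C}$-coloured traces of length two, and have the same complete $\mathcal{C}$-coloured traces of length one. Then $\mathcal{C}$ is fully consistent.
   Context: Fix a set $\mathbf{AP}$ of atomic propositions. A Kripke structure is $K=(S,L,\to)$ with $L:S\to\mathcal{P}(\mathbf{AP})$ and $\to\subseteq S\times S$ (not necessarily total); a state $s$ satisfies $p\in\mathbf{AP}$ iff $p\in L(s)$. A finite path from $s$ is a sequence $s_0,\dots,s_n$ with $s_0=s$ and $s_k\to s_{k+1}$; an infinite path is defined analogously; a path is maximal if it is infinite or its last state has no successor. A colouring is a function $\mathcal{C}$ from $S$ into an arbitrary set of colours. For a path $\pi=s_0,s_1,\dots$, $\mathcal{C}(\pi)$ is obtained from $\mathcal{C}(s_0),\mathcal{C}(s_1),\dots$ by contracting each maximal (finite or infinite) block of consecutive equal colours to a single colour; for $\pi$ a path from $s$, $\mathcal{C}(\pi)$ is a $\mathcal{C}$-coloured trace of $s$, complete if $\pi$ is maximal; its length is its number of entries. $\mathcal{C}$ is fully consistent if any two states of the same colour satisfy the same atomic propositions and have the same complete $\mathcal{C}$-coloured traces. *)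

From Stdlib Require Import List Arith.
Import ListNotations.
Set Implicit Arguments.

Section Kripke.
Variables (S AP Col : Type).
Variable L : S -> AP -> Prop.
Variable R : S -> S -> Prop.
Variable C : S -> Col.

Fixpoint chain (x : S) (l : list S) : Prop :=
  match l with
  | [] => True
  | y :: r => R x y /\ chain y r
  end.

Definition fin_path (s : S) (l : list S) : Prop :=
  exists rest, l = s :: rest /\ chain s rest.

Definition inf_path (s : S) (p : nat -> S) : Prop :=
  p 0 = s /\ forall n, R (p n) (p (Datatypes.S n)).

Definition maximal_fin (l : list S) : Prop :=
  forall x, (exists l', l = l' ++ [x]) -> forall y, ~ R x y.

Inductive trace : Type :=
| TFin : list Col -> trace
| TInf : (nat -> Col) -> trace.

(* contraction of a finite colour sequence: each maximal block of
   consecutive equal colours is contracted to a single colour *)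
Inductive contractL : list Col -> list Col -> Prop :=
| cl_nil : contractL [] []
| cl_one : forall x, contractL [x] [x]
| cl_eq : forall x l r, contractL (x :: l) r -> contractL (x :: x :: l) r
| cl_neq : forall x y l r, x <> y -> contractL (y :: l) r ->
    contractL (x :: y :: l) (x :: r).

Definition contractI (c : nat -> Col) (t : trace) : Prop :=
  match t with
  | TFin l =>
      (* eventually constant: finitely many blocks, the last one infinite *)
      exists N, (forall n, N <= n -> c n = c N) /\ contractL (map c (seq 0 (Datatypes.S N))) l
  | TInf f =>
      (* g k = start index of the k-th block, which has colour f k *)
      exists g : nat -> nat, g 0 = 0 /\ (forall k, g k < g (Datatypes.S k)) /\
        (forall k n, g k <= n < g (Datatypes.S k) -> c n = f k) /\
        (forall k, f k <> f (Datatypes.S k))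
  end.

Definition ctrace (s : S) (t : trace) : Prop :=
  (exists l lc, fin_path s l /\ contractL (map C l) lc /\ t = TFin lc) \/
  (exists p, inf_path s p /\ contractI (fun n => C (p n)) t).

Definition complete_ctrace (s : S) (t : trace) : Prop :=
  (exists l lc, fin_path s l /\ maximal_fin l /\ contractL (map C l) lc /\ t = TFin lc) \/
  (exists p, inf_path s p /\ contractI (fun n => C (p n)) t).

Definition has_length (t : trace) (n : nat) : Prop :=
  match t with
  | TFin l => length l = n
  | TInf _ => False
  end.

Definition same_props (s s' : S) : Prop := forall p, L s p <-> L s' p.

Definition fully_consistent : Prop :=
  forall s s', C s = C s' ->
    same_props s s' /\ (forall t, complete_ctrace s t <-> complete_ctrace s' t).

End Kripke.

(* A colour step from s is a path that stays in the colour of s and then leaves it; the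
   length-two coloured traces of s are exactly the pairs (C s, C u) for colour steps from s
   to u, so equally coloured states have colour steps to the same colours.  A complete
   finite trace c :: d :: l of s splits into a colour step to some u of colour d and a
   complete trace d :: l of u, which gives the finite case by induction on l starting from
   the complete traces of length one.  A complete infinite trace is an infinite sequence of
   colour steps; transferring the steps one by one (dependent choice) and concatenating the
   intermediate paths yields the same trace from any state of the same colour. *)

From Stdlib Require Import List Arith Lia Classical ClassicalEpsilon ChoiceFacts.
Import ListNotations.

Lemma map_seq0_succ {A} (f : nat -> A) k :
  map f (seq 0 (S k)) = f 0 :: map (fun n => f (S n)) (seq 0 k).
Proof. simpl. f_equal. rewrite <- seq_shift, map_map. reflexivity. Qed.

Section Contraction.
Local Set Implicit Arguments.
Variable Col : Type.

Lemma contractL_single_inv (a : Col) r : contractL [a] r -> r = [a].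
Proof. intro H; inversion H; auto. Qed.

Lemma contractL_cons2_inv (a b : Col) t r : contractL (a :: b :: t) r ->
  (a = b /\ contractL (b :: t) r) \/
  (a <> b /\ exists r', r = a :: r' /\ contractL (b :: t) r').
Proof. intro H; inversion H; subst; eauto. Qed.

Lemma contractL_head (a : Col) t r : contractL (a :: t) r -> exists r', r = a :: r'.
Proof.
  remember (a :: t) as l eqn:E. intro H. revert a t E.
  induction H; intros a t E; inversion E; subst; eauto.
Qed.

Lemma contractL_nil_r (l : list Col) : contractL l [] -> l = [].
Proof. destruct l as [|a t]; [auto|]. intro H. destruct (contractL_head H). discriminate. Qed.

End Contraction.

Lemma indexed_dependent_choice {A} (P : nat -> A -> Prop) (Q : A -> A -> Prop) a0 :
  P 0 a0 -> (forall k x, P k x -> exists y, P (S k) y /\ Q x y) ->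
  exists b : nat -> A, b 0 = a0 /\ forall k, P k (b k) /\ Q (b k) (b (S k)).
Proof.
  intros P0 Hstep.
  (* Guarding by [P] makes [Step] total, as dependent choice requires. *)
  set (Step := fun (kx ly : nat * A) =>
    fst ly = S (fst kx) /\ (P (fst kx) (snd kx) -> P (fst ly) (snd ly) /\ Q (snd kx) (snd ly))).
  assert (Htotal : forall kx, exists ly, Step kx ly).
  { intros [k x]. destruct (classic (P k x)) as [Hx|Hx].
    - destruct (Hstep k x Hx) as [y Hy]. exists (S k, y). unfold Step. simpl. auto.
    - exists (S k, x). unfold Step. simpl. tauto. }
  destruct (functional_choice_imp_functional_dependent_choice choice Step Htotal (0, a0))
    as [h [H0 Hh]].
  assert (Hfst : forall k, fst (h k) = k).
  { induction k; [rewrite H0; reflexivity | rewrite (proj1 (Hh k)); auto]. }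
  assert (Hh' : forall k,
    P k (snd (h k)) -> P (S k) (snd (h (S k))) /\ Q (snd (h k)) (snd (h (S k)))).
  { intro k. pose proof (proj2 (Hh k)) as Hk. rewrite !Hfst in Hk. exact Hk. }
  assert (HP : forall k, P k (snd (h k))).
  { induction k; [rewrite H0; exact P0 | apply Hh'; exact IHk]. }
  exists (fun k => snd (h k)). split; [rewrite H0; reflexivity|].
  intro k. split; [apply HP | apply Hh', HP].
Qed.

Section Flatten.
Local Set Implicit Arguments.
Variables (A : Type) (hd : nat -> A) (tl : nat -> list A).

(* [flatten] runs through the blocks [hd k :: tl k] one after another: block [k] starts at
   position [offset k], and [locate n = (k, i)] when position [n] is entry [i] of block [k]. *)

Fixpoint offset (k : nat) : nat :=
  match k with 0 => 0 | S k => offset k + S (length (tl k)) end.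

Fixpoint locate (n : nat) : nat * nat :=
  match n with
  | 0 => (0, 0)
  | S n => let (k, i) := locate n in if i <? length (tl k) then (k, S i) else (S k, 0)
  end.

Definition flatten (n : nat) : A := let (k, i) := locate n in nth i (hd k :: tl k) (hd k).

Lemma locate_spec n k i : locate n = (k, i) -> offset k + i = n /\ i <= length (tl k).
Proof.
  revert k i. induction n as [|n IH]; intros k i E; simpl in E.
  - inversion E; subst. simpl. lia.
  - destruct (locate n) as [k0 i0]. destruct (IH k0 i0 eq_refl) as [H1 H2].
    destruct (i0 <? length (tl k0)) eqn:Lt; inversion E; subst.
    + apply Nat.ltb_lt in Lt. lia.
    + apply Nat.ltb_ge in Lt. simpl. lia.
Qed.

Lemma offset_le_lt k1 k2 : k1 < k2 -> offset (S k1) <= offset k2.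
Proof. induction 1; simpl in *; lia. Qed.

Lemma flatten_in_block k n : offset k <= n < offset (S k) -> In (flatten n) (hd k :: tl k).
Proof.
  intro Hn. unfold flatten. destruct (locate n) as [k' i] eqn:E.
  destruct (locate_spec n E) as [H1 H2].
  assert (k' = k) as ->.
  { destruct (Nat.lt_trichotomy k' k) as [Lt|[Eq|Gt]]; auto.
    - pose proof (offset_le_lt Lt). simpl in *. lia.
    - pose proof (offset_le_lt Gt). simpl in *. lia. }
  apply nth_In. simpl. lia.
Qed.

Lemma flatten_consecutive n : exists k i, i <= length (tl k) /\
  flatten n = nth i (hd k :: tl k ++ [hd (S k)]) (hd k) /\
  flatten (S n) = nth (S i) (hd k :: tl k ++ [hd (S k)]) (hd k).
Proof.
  unfold flatten. cbn [locate]. destruct (locate n) as [k i] eqn:E.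
  destruct (locate_spec n E) as [_ Hi]. exists k, i. split; [exact Hi|].
  change (hd k :: tl k ++ [hd (S k)]) with ((hd k :: tl k) ++ [hd (S k)]).
  split; [rewrite app_nth1 by (simpl; lia); reflexivity|].
  destruct (i <? length (tl k)) eqn:Lt.
  - apply Nat.ltb_lt in Lt. rewrite app_nth1 by (simpl; lia). reflexivity.
  - apply Nat.ltb_ge in Lt. rewrite app_nth2 by (simpl; lia).
    replace (S i - length (hd k :: tl k)) with 0 by (simpl; lia). reflexivity.
Qed.

End Flatten.

Section Kripke.
Local Set Implicit Arguments.
Variables (St Col : Type) (R : St -> St -> Prop) (C : St -> Col).

Lemma chain_nth l x d i :
  chain R x l -> i < length l -> R (nth i (x :: l) d) (nth (S i) (x :: l) d).
Proof.
  revert x i. induction l as [|y l IH]; intros x i Ch Hi; simpl in Hi; [lia|].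
  destruct Ch as [Rxy Ch]. destruct i as [|i]; [exact Rxy|]. apply (IH y i Ch). lia.
Qed.

Lemma maximal_fin_app_r l1 l2 : maximal_fin R (l1 ++ l2) -> maximal_fin R l2.
Proof.
  intros M x [l' E]. apply M. exists (l1 ++ l'). rewrite E, app_assoc. reflexivity.
Qed.

Lemma maximal_fin_cons x l : l <> [] -> maximal_fin R l -> maximal_fin R (x :: l).
Proof.
  intros NE M z [[|y l'] E] w; simpl in E; inversion E; subst.
  - congruence.
  - apply M. eauto.
Qed.

Inductive colour_step : St -> St -> Prop :=
| colour_step_now x y : R x y -> C y <> C x -> colour_step x y
| colour_step_later x y z : R x y -> C y = C x -> colour_step y z -> colour_step x z.

Lemma colour_step_colour x y : colour_step x y -> C y <> C x.
Proof. induction 1; congruence. Qed.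

Lemma colour_step_chain x y : colour_step x y ->
  exists m, chain R x (m ++ [y]) /\ Forall (fun z => C z = C x) (x :: m).
Proof.
  induction 1 as [x y Rxy NE | x y z Rxy E Sg IH].
  - exists []. simpl. auto.
  - destruct IH as [m [Ch F]]. exists (y :: m). split; [simpl; auto|].
    constructor; [reflexivity|]. eapply Forall_impl; [|exact F]. intros a Ha. congruence.
Qed.

Lemma colour_step_of_path (p : nat -> St) (Hp : forall n, R (p n) (p (S n))) d i :
  (forall n, i <= n < i + S d -> C (p n) = C (p i)) -> C (p (i + S d)) <> C (p i) ->
  colour_step (p i) (p (i + S d)).
Proof.
  revert i. induction d as [|d IH]; intros i Hc Hne.
  - rewrite Nat.add_1_r in *. apply colour_step_now; auto.
  - apply colour_step_later with (p (S i)); [auto | apply Hc; lia|].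
    replace (i + S (S d)) with (S i + S d) in * by lia. apply IH.
    + intros n Hn. rewrite (Hc n), (Hc (S i)) by lia. reflexivity.
    + rewrite (Hc (S i)) by lia. exact Hne.
Qed.

Lemma colour_step_contract x u : colour_step x u ->
  exists rest, chain R x rest /\ contractL (map C (x :: rest)) [C x; C u].
Proof.
  induction 1 as [x y Rxy NE | x y z Rxy E Sg IH].
  - exists [y]. split; [simpl; auto|]. apply cl_neq; [congruence | constructor].
  - destruct IH as [rest [Ch Ct]]. exists (y :: rest). split; [simpl; auto|].
    simpl in *. rewrite E in *. apply cl_eq. exact Ct.
Qed.

Lemma colour_step_ctrace x u : colour_step x u -> ctrace R C x (TFin [C x; C u]).
Proof.
  intro Sg. destruct (colour_step_contract Sg) as [rest [Ch Ct]].
  left. exists (x :: rest), [C x; C u]. repeat split; auto. exists rest. auto.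
Qed.

Lemma chain_contract_split rest x c d l :
  chain R x rest -> contractL (map C (x :: rest)) (c :: d :: l) ->
  exists u pre rest', rest = pre ++ u :: rest' /\ colour_step x u /\ C x = c /\ C u = d /\
    chain R u rest' /\ contractL (map C (u :: rest')) (d :: l).
Proof.
  revert x. induction rest as [|y rest IH]; intros x Ch Ct; simpl in Ct.
  - apply contractL_single_inv in Ct. discriminate.
  - destruct Ch as [Rxy Ch].
    destruct (contractL_cons2_inv Ct) as [[E Ct'] | [NE [r' [Er Ct']]]].
    + destruct (IH y Ch Ct') as [u [pre [rest' [-> [Sg [Cy [Cu [Ch' Ct'']]]]]]]].
      exists u, (y :: pre), rest'. repeat split; auto.
      * apply colour_step_later with y; auto.
      * congruence.
    + injection Er as -> <-. destruct (contractL_head Ct') as [r'' Er'].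
      injection Er' as -> ->. exists y, [], rest.
      repeat split; auto. apply colour_step_now; auto.
Qed.

Lemma path_contract_split (p : nat -> St) (Hp : forall n, R (p n) (p (S n))) N c d l :
  (forall n, N <= n -> C (p n) = C (p N)) ->
  contractL (map (fun n => C (p n)) (seq 0 (S N))) (c :: d :: l) ->
  exists k N', colour_step (p 0) (p k) /\ C (p 0) = c /\ C (p k) = d /\
    (forall n, N' <= n -> C (p (k + n)) = C (p (k + N'))) /\
    contractL (map (fun n => C (p (k + n))) (seq 0 (S N'))) (d :: l).
Proof.
  revert p Hp. induction N as [|N IH]; intros p Hp HN Ct.
  - apply contractL_single_inv in Ct. discriminate.
  - assert (Etail : map (fun n => C (p (S n))) (seq 0 (S N)) =
                     C (p 1) :: map (fun n => C (p (S (S n)))) (seq 0 N)) by apply map_seq0_succ.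
    rewrite map_seq0_succ, Etail in Ct.
    destruct (contractL_cons2_inv Ct) as [[E Ct'] | [NE [r' [Er Ct']]]];
      rewrite <- Etail in Ct'.
    + destruct (IH (fun n => p (S n)) (fun n => Hp (S n))) as [k [N' [Sg [Cc [Cd [HN' Ct'']]]]]].
      * intros n Hn. rewrite (HN (S n)) by lia. reflexivity.
      * exact Ct'.
      * exists (S k), N'. repeat split; auto.
        -- apply colour_step_later with (p 1); auto.
        -- congruence.
    + injection Er as -> <-. rewrite Etail in Ct'.
      destruct (contractL_head Ct') as [r'' Er']. injection Er' as -> ->.
      rewrite <- Etail in Ct'.
      exists 1, N. repeat split; auto.
      * apply colour_step_now; auto.
      * intros n Hn. simpl. rewrite (HN (S n)) by lia. reflexivity.
Qed.

Lemma complete_ctrace_prepend x y m m' : R x y -> complete_ctrace R C y (TFin m) ->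
  (forall t, contractL (C y :: t) m -> contractL (C x :: C y :: t) m') ->
  complete_ctrace R C x (TFin m').
Proof.
  intros Rxy [[l [lc [[rest [-> Ch]] [M [Ct E]]]]] | [p [[P0 Hp] [N [HN Ct]]]]].
  - injection E as <-. intro Hm. left. exists (x :: y :: rest), m'. repeat split.
    + exists (y :: rest). simpl. auto.
    + apply maximal_fin_cons; [discriminate | exact M].
    + apply Hm. exact Ct.
  - intro Hm. right. exists (fun n => match n with 0 => x | S n => p n end). split.
    + split; [reflexivity|]. intros [|n]; [rewrite P0; exact Rxy | apply Hp].
    + exists (S N). split.
      * intros [|n] Hn; [lia|]. apply HN. lia.
      * rewrite map_seq0_succ. cbn beta iota. rewrite map_seq0_succ, P0.
        rewrite map_seq0_succ, P0 in Ct. apply Hm. exact Ct.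
Qed.

Lemma complete_ctrace_colour_step x u m : colour_step x u ->
  complete_ctrace R C u (TFin m) -> complete_ctrace R C x (TFin (C x :: m)).
Proof.
  intro Sg. revert m. induction Sg as [x y Rxy NE | x y z Rxy E Sg IH]; intros m Hm.
  - apply (complete_ctrace_prepend Rxy Hm). intros t Ht. apply cl_neq; auto.
  - rewrite <- E. apply (complete_ctrace_prepend Rxy (IH m Hm)).
    intros t Ht. rewrite <- E. apply cl_eq. exact Ht.
Qed.

Lemma complete_ctrace_nil x : ~ complete_ctrace R C x (TFin []).
Proof.
  intros [[l [lc [[rest [-> _]] [_ [Ct E]]]]] | [p [_ [N [_ Ct]]]]].
  - injection E as <-. apply contractL_nil_r in Ct. discriminate.
  - apply contractL_nil_r in Ct. rewrite map_seq0_succ in Ct. discriminate.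
Qed.

Lemma complete_ctrace_cons2_inv x c d l : complete_ctrace R C x (TFin (c :: d :: l)) ->
  exists u, colour_step x u /\ C x = c /\ C u = d /\ complete_ctrace R C u (TFin (d :: l)).
Proof.
  intros [[lx [lc [[rest [-> Ch]] [M [Ct E]]]]] | [p [[<- Hp] [N [HN Ct]]]]].
  - injection E as <-.
    destruct (chain_contract_split Ch Ct) as [u [pre [rest' [-> [Sg [Cx [Cu [Ch' Ct']]]]]]]].
    exists u. repeat split; auto. left. exists (u :: rest'), (d :: l). repeat split; auto.
    + exists rest'. auto.
    + apply (maximal_fin_app_r (x :: pre)). exact M.
  - destruct (path_contract_split p Hp HN Ct) as [k [N' [Sg [Cc [Cd [HN' Ct']]]]]].
    exists (p k). repeat split; auto. right. exists (fun n => p (k + n)). split.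
    + split; [rewrite Nat.add_0_r; reflexivity|]. intro n. rewrite Nat.add_succ_r. apply Hp.
    + exists N'. auto.
Qed.

Lemma ctrace_length2_inv x c d : ctrace R C x (TFin [c; d]) ->
  exists u, colour_step x u /\ C x = c /\ C u = d.
Proof.
  intros [[lx [lc [[rest [-> Ch]] [Ct E]]]] | [p [[<- Hp] [N [HN Ct]]]]].
  - injection E as <-.
    destruct (chain_contract_split Ch Ct) as [u [_ [_ [_ [Sg [Cx [Cu _]]]]]]]. eauto.
  - destruct (path_contract_split p Hp HN Ct) as [k [_ [Sg [Cc [Cd _]]]]]. eauto.
Qed.

Lemma complete_ctrace_inf_inv s f : complete_ctrace R C s (TInf f) ->
  exists a, a 0 = s /\ forall k, colour_step (a k) (a (S k)) /\ C (a k) = f k.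
Proof.
  intros [[l [lc [_ [_ [_ E]]]]] | [p [[<- Hp] [g [G0 [Ginc [Gcol Gneq]]]]]]]; [discriminate|].
  assert (Cg : forall k, C (p (g k)) = f k) by (intro k; apply Gcol; specialize (Ginc k); lia).
  exists (fun k => p (g k)). split; [rewrite G0; reflexivity|]. intro k. split; [|apply Cg].
  specialize (Ginc k). replace (g (S k)) with (g k + S (g (S k) - g k - 1)) by lia.
  apply colour_step_of_path; auto.
  - intros n Hn. rewrite Cg. apply Gcol. lia.
  - replace (g k + S (g (S k) - g k - 1)) with (g (S k)) by lia.
    rewrite !Cg. apply not_eq_sym, Gneq.
Qed.

Lemma colour_steps_complete_ctrace (b : nat -> St) f :
  (forall k, colour_step (b k) (b (S k))) -> (forall k, C (b k) = f k) ->
  complete_ctrace R C (b 0) (TInf f).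
Proof.
  intros Sg Cb.
  destruct (choice (fun k m => chain R (b k) (m ++ [b (S k)]) /\
                               Forall (fun z => C z = C (b k)) (b k :: m)))
    as [m Hm]; [intro k; apply colour_step_chain, Sg|].
  right. exists (flatten b m). split; [split; [reflexivity|]|].
  - intro n. destruct (flatten_consecutive b m n) as [k [i [Hi [-> ->]]]].
    apply chain_nth; [apply Hm | rewrite length_app; simpl; lia].
  - exists (offset m). split; [reflexivity|]. split; [intro k; simpl; lia|]. split.
    + intros k n Hn. rewrite <- Cb. apply (proj1 (Forall_forall _ _) (proj2 (Hm k))).
      apply flatten_in_block. exact Hn.
    + intro k. rewrite <- !Cb. apply not_eq_sym, colour_step_colour, Sg.
Qed.

Section Transfer.

Hypothesis ctrace2_transfer : forall s s' t,
  C s = C s' -> has_length t 2 -> ctrace R C s t -> ctrace R C s' t.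

Lemma colour_step_transfer s s' u : C s = C s' -> colour_step s u ->
  exists u', colour_step s' u' /\ C u' = C u.
Proof.
  intros E Sg. apply colour_step_ctrace, (ctrace2_transfer E) in Sg; [|reflexivity].
  destruct (ctrace_length2_inv Sg) as [u' [Sg' [_ Cu']]]. eauto.
Qed.

Lemma complete_ctrace_inf_transfer s s' f : C s = C s' ->
  complete_ctrace R C s (TInf f) -> complete_ctrace R C s' (TInf f).
Proof.
  intros E Hs. destruct (complete_ctrace_inf_inv Hs) as [a [<- Ha]].
  destruct (indexed_dependent_choice (fun k x => C x = f k) colour_step s') as [b [<- Hb]].
  - rewrite <- E. apply Ha.
  - intros k x Hx. destruct (Ha k) as [Sg Ck].
    destruct (colour_step_transfer (eq_trans Ck (eq_sym Hx)) Sg) as [y [Sy Cy]].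
    exists y. split; [rewrite Cy; apply Ha | exact Sy].
  - apply colour_steps_complete_ctrace; intro k; apply Hb.
Qed.

Hypothesis complete1_transfer : forall s s' t, C s = C s' -> has_length t 1 ->
  complete_ctrace R C s t -> complete_ctrace R C s' t.

Lemma complete_ctrace_fin_transfer l : forall s s', C s = C s' ->
  complete_ctrace R C s (TFin l) -> complete_ctrace R C s' (TFin l).
Proof.
  induction l as [|c [|d l] IH]; intros s s' E Hs.
  - exfalso. exact (complete_ctrace_nil Hs).
  - apply (complete1_transfer E); [reflexivity | exact Hs].
  - destruct (complete_ctrace_cons2_inv Hs) as [u [Sg [<- [<- Hu]]]].
    destruct (colour_step_transfer E Sg) as [u' [Sg' Cu']].
    rewrite E. apply (complete_ctrace_colour_step Sg'). exact (IH u u' (eq_sym Cu') Hu).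
Qed.

End Transfer.

End Kripke.

Theorem lemma2p6 (S AP Col : Type) (L : S -> AP -> Prop) (R : S -> S -> Prop)
  (C : S -> Col)
  (H : forall s s', C s = C s' ->
     same_props L s s' /\
     (forall t, has_length t 2 -> (ctrace R C s t <-> ctrace R C s' t)) /\
     (forall t, has_length t 1 ->
        (complete_ctrace R C s t <-> complete_ctrace R C s' t))) :
  fully_consistent L R C.
Proof.
  assert (ctrace2_transfer : forall s s' t,
    C s = C s' -> has_length t 2 -> ctrace R C s t -> ctrace R C s' t)
    by (intros s s' t E; apply (proj1 (proj2 (H s s' E)))).
  assert (complete1_transfer : forall s s' t,
    C s = C s' -> has_length t 1 -> complete_ctrace R C s t -> complete_ctrace R C s' t)
    by (intros s s' t E; apply (proj2 (proj2 (H s s' E)))).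
  assert (transfer : forall s s' t,
    C s = C s' -> complete_ctrace R C s t -> complete_ctrace R C s' t).
  { intros s s' [l|f] E.
    - exact (complete_ctrace_fin_transfer ctrace2_transfer complete1_transfer s' E).
    - exact (complete_ctrace_inf_transfer ctrace2_transfer s' E). }
  intros s s' E. split; [exact (proj1 (H s s' E))|].
  intro t. split; apply transfer; [exact E | exact (eq_sym E)].
Qed.
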